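(* (1) Figure-eight knot. Let $\Delta(E;t)=-t^2+3t-1$ be the Alexander polynomial of the figure-eight knot $E$. For $u\in\mathbb{C}$ and $y\in\mathbb{C}\setminus\{0\}$ with $y+y^{-1}=2\cosh(u)-1$, put \[ H(E;u,y)=\operatorname{Li}_2\bigl(y^{-1}e^{-u}\bigr)-\operatorname{Li}_2\bigl(y\,e^{-u}\bigr)+\bigl(\log(-y)+\pi\sqrt{-1}\bigr)u, \] where $\operatorname{Li}_2$ is the dilogarithm and the branch of $\log$ is chosen so that $\log(-1)=-\pi\sqrt{-1}$. Then there exist $u\in\mathbb{C}$ and such a $y$ with $H(E;u,y)=0$ and $\Delta(E;e^{u})=0$. (2) Torus knots. Let $a,b>1$ be coprime integers, let $\Delta(T(a,b);t)=\dfrac{(t^{ab}-1)(t-1)}{(t^a-1)(t^b-1)}$ be the Alexander polynomial of the torus knot $T(a,b)$, and define the entire function \[ H\bigl(T(a,b);u\bigr)=\frac{-\bigl(ab(u+2\pi\sqrt{-1})-2\pi\sqrt{-1}\bigr)^2}{4ab},\qquad u\in\mathbb{C}. \] Then the equations $H\bigl(T(a,b);u\bigr)=0$ and $\Delta\bigl(T(a,b);e^{u}\bigr)=0$ have a common root $u\in\mathbb{C}$.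
   Context: Here $\Delta(T(a,b);t)$ is understood as the polynomial in $t$ obtained from the given rational expression (which is a polynomial), and $\Delta(K;e^u)=0$ means this polynomial vanishes at $t=e^u$. The functions $H$ above are the explicit formulas (regarded as functions on all of $\mathbb{C}$) for the quantity $H(K;u)=(u+2\pi\sqrt{-1})\lim_{N\to\infty}\frac{1}{N}\log J_N\bigl(K;\exp((u+2\pi\sqrt{-1})/N)\bigr)$, where $J_N(K;q)$ is the $N$-colored Jones polynomial normalized so that $J_N(\text{unknot};q)=1$. *)

From HB Require Import structures.
From mathcomp Require Import all_boot all_order all_algebra.
From mathcomp Require Import all_classical all_reals all_analysis.
From mathcomp Require Import complex.

Set Implicit Arguments.
Unset Strict Implicit.
Unset Printing Implicit Defensive.

Import Order.TTheory GRing.Theory Num.Theory.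
Import numFieldNormedType.Exports.
Local Open Scope ring_scope.
Local Open Scope complex_scope.

Section Cdefs.
Variable R : realType.

Definition cexp (z : R[i]) : R[i] :=
  (expR (complex.Re z) * cos (complex.Im z)) +i* (expR (complex.Re z) * sin (complex.Im z)).

Definition ccosh (z : R[i]) : R[i] := (cexp z + cexp (- z)) / 2%:R.

Definition ipi : R[i] := 0 +i* pi.

Definition modc (z : R[i]) : R := Num.sqrt (complex.Re z ^+ 2 + complex.Im z ^+ 2).

(* principal argument, in (-pi, pi] *)
Definition Arg (z : R[i]) : R :=
  if 0 <= complex.Im z then acos (complex.Re z / modc z) else - acos (complex.Re z / modc z).

Definition Log (z : R[i]) : R[i] := ln (modc z) +i* Arg z.

(* argument in [-pi, pi), so that arg' (-1) = - pi *)
Definition Arg' (z : R[i]) : R :=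
  if 0 < complex.Im z then acos (complex.Re z / modc z) else - acos (complex.Re z / modc z).

(* the logarithm branch used in the paper: Im in [-pi, pi),
   so that log' (-1) = - pi * sqrt(-1) *)
Definition log' (z : R[i]) : R[i] := ln (modc z) +i* Arg' z.

Definition Li2 (z : R[i]) : R[i] :=
  let f := fun s : R => Log (1 - s%:C * z) / s%:C in
  - ((Rintegral (@lebesgue_measure R) `[0, 1]%classic (fun s => complex.Re (f s)))
      +i* (Rintegral (@lebesgue_measure R) `[0, 1]%classic (fun s => complex.Im (f s)))).

Definition alexE : {poly R[i]} := - 'X^2 + 3%:R *: 'X - 1.

Definition HE (u y : R[i]) : R[i] :=
  Li2 (y^-1 * cexp (- u)) - Li2 (y * cexp (- u)) + (log' (- y) + ipi) * u.

(* Alexander polynomial of T(a,b): the polynomial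
   (t^{ab}-1)(t-1) / ((t^a-1)(t^b-1)) (exact polynomial division) *)
Definition alexT (a b : nat) : {poly R[i]} :=
  (('X^(a * b) - 1) * ('X - 1)) %/ (('X^a - 1) * ('X^b - 1)).

Definition HT (a b : nat) (u : R[i]) : R[i] :=
  - ((a * b)%:R * (u + 2%:R * ipi) - 2%:R * ipi) ^+ 2 / (4 * (a * b))%:R.

End Cdefs.

From HB Require Import structures.
From mathcomp Require Import all_boot all_order all_algebra.
From mathcomp Require Import all_classical all_reals all_analysis.
From mathcomp Require Import complex.
From mathcomp Require Import ring lra.
Set Implicit Arguments.
Unset Strict Implicit.
Unset Printing Implicit Defensive.

Import Order.TTheory GRing.Theory Num.Theory.
Local Open Scope ring_scope.
Local Open Scope complex_scope.

(* At a root t = e^u of the Alexander polynomial of the figure-eight knot,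
   t + 1/t = 3, so the constraint y + 1/y = 2 cosh u - 1 = 2 forces y = 1;
   then the two dilogarithm terms cancel, and the linear term vanishes because
   log(-1) = - pi i.  For the torus knot T(a,b) take u = 2 pi i/ab - 2 pi i,
   which kills H, and for which e^u is a primitive ab-th root of unity.  As a
   and b are coprime, (t^a - 1)(t^b - 1) divides (t^ab - 1)(t - 1), and the
   quotient vanishes at a primitive ab-th root of unity, where neither t^a - 1
   nor t^b - 1 does. *)

Lemma unity_root_coprime_eq1 (R : idomainType) a b (x : R) :
  (0 < a)%N -> coprime a b -> x ^+ a = 1 -> x ^+ b = 1 -> x = 1.
Proof.
move=> a_gt0 co_ab xa xb.
have [m prim_m m_dvd_a] := prim_order_exists a_gt0 xa.
have m_dvd_b : (m %| b)%N by rewrite (prim_order_dvd prim_m) xb.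
have m1 : m = 1%N by apply/eqP; rewrite -dvdn1 -(eqP co_ab) dvdn_gcd m_dvd_a.
by have := prim_expr_order prim_m; rewrite m1 expr1.
Qed.

Section TorusAlexander.
Variable F : numClosedFieldType.

Lemma coprimep_Xn_sub1_sumXn a b : (0 < a)%N -> (0 < b)%N -> coprime a b ->
  coprimep ('X^a - 1 : {poly F}) (\sum_(i < b) 'X^i).
Proof.
move=> a_gt0 b_gt0 co_ab; apply: Pdiv.ClosedField.root_coprimep => x.
rewrite /root !hornerE subr_eq0 horner_sum => /eqP xa.
under eq_bigr do rewrite hornerXn.
apply/negP => /eqP geom_x0.
have xb : x ^+ b = 1 by apply/eqP; rewrite -subr_eq0 subrX1 geom_x0 mulr0.
move: geom_x0; rewrite (unity_root_coprime_eq1 a_gt0 co_ab xa xb).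
under eq_bigr do rewrite expr1n.
by rewrite sumr_const card_ord => /eqP; rewrite pnatr_eq0 gtn_eqF.
Qed.

Lemma dvdp_torus_alexander a b : (0 < a)%N -> (0 < b)%N -> coprime a b ->
  ('X^a - 1 : {poly F}) * ('X^b - 1) %| ('X^(a * b) - 1) * ('X - 1).
Proof.
move=> a_gt0 b_gt0 co_ab.
set Q : {poly F} := \sum_(i < b) 'X^i.
have Xb : 'X^b - 1 = ('X - 1) * Q by rewrite subrX1.
have -> : ('X^a - 1) * ('X^b - 1) = ('X^a - 1) * Q * ('X - 1) by rewrite Xb; ring.
rewrite dvdp_mul // Gauss_dvdp ?coprimep_Xn_sub1_sumXn //.
rewrite {1}exprM (subrX1 ('X^a) b) dvdp_mulIl /=.
apply: (@dvdp_trans _ ('X^b - 1)); first by rewrite Xb dvdp_mulIr.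
by rewrite mulnC exprM (subrX1 ('X^b) a) dvdp_mulIl.
Qed.

Lemma root_torus_alexander a b (z : F) : (1 < a)%N -> (1 < b)%N -> coprime a b ->
  (a * b).-primitive_root z ->
  root ((('X^(a * b) - 1) * ('X - 1)) %/ (('X^a - 1) * ('X^b - 1))) z.
Proof.
move=> a_gt1 b_gt1 co_ab prim_z.
have ndvd c d : (0 < c)%N -> (1 < d)%N -> ~~ (c * d %| c)%N.
  by move=> c_gt0 d_gt1; rewrite -{2}(muln1 c) dvdn_pmul2l // dvdn1 gtn_eqF.
have dvd_ab := dvdp_torus_alexander (ltnW a_gt1) (ltnW b_gt1) co_ab.
have := congr1 (horner^~ z) (divpK dvd_ab).
rewrite /= !hornerE (prim_expr_order prim_z) subrr mul0r => /eqP.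
rewrite !mulf_eq0 !subr_eq0 -!(prim_order_dvd prim_z).
rewrite (negbTE (ndvd _ _ (ltnW a_gt1) b_gt1)) mulnC.
by rewrite (negbTE (ndvd _ _ (ltnW b_gt1) a_gt1)) !orbF.
Qed.
End TorusAlexander.


Lemma cos_lt1 (R : realType) (x : R) : 0 < x < pi *+ 2 -> cos x < 1.
Proof.
move=> /andP[x0 x2pi].
have sin_half_gt0 : 0 < sin (x / 2).
  apply: sin_gt0_pi; apply/andP; split; first by rewrite divr_gt0.
  by rewrite ltr_pdivrMr // mulr_natr.
have -> : x = (x / 2) *+ 2 by rewrite -mulr_natr divfK.
rewrite cos_mulr2n cos2sin2 -mulr_natr; nra.
Qed.

Section Cexp.
Variable R : realType.
Implicit Types z w : R[i].

Lemma cexpD z w : cexp (z + w) = cexp z * cexp w.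
Proof.
case: z => x y; case: w => x' y'.
rewrite /cexp /= expRD cosD sinD.
apply/eqP; rewrite eq_complex /=; apply/andP; split; apply/eqP; ring.
Qed.

Lemma cexp0 : cexp 0 = 1 :> R[i].
Proof. by rewrite /cexp /= expR0 cos0 sin0 !mul1r. Qed.

Lemma cexpN z : cexp (- z) = (cexp z)^-1.
Proof. by apply/esym/mulr1_eq; rewrite -cexpD subrr cexp0. Qed.

Lemma cexpMn z k : cexp (z *+ k) = cexp z ^+ k.
Proof.
elim: k => [|k IH]; first by rewrite mulr0n expr0 cexp0.
by rewrite mulrS exprS cexpD IH.
Qed.

Lemma complexMn (x y : R) k : (x +i* y) *+ k = (x *+ k) +i* (y *+ k).
Proof. by elim: k => [|k IH]; rewrite ?mulr0n // !mulrS IH. Qed.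

Lemma cexp_real (x : R) : cexp x%:C = (expR x)%:C.
Proof. by rewrite /cexp /= cos0 sin0 mulr1 mulr0. Qed.

Lemma cexp_imaginary (t : R) : cexp (0 +i* t) = cos t +i* sin t.
Proof. by rewrite /cexp /= expR0 !mul1r. Qed.

Lemma ccoshE z : 2%:R * ccosh z = cexp z + (cexp z)^-1.
Proof. by rewrite /ccosh mulrC divfK ?pnatr_eq0 // cexpN. Qed.

Lemma two_ipi_divn (n : nat) : 2%:R * ipi R / n%:R = 0 +i* (pi *+ 2 / n%:R).
Proof.
rewrite /ipi -!(rmorph_nat (real_complex R)) -fmorphV /=; simpc.
by rewrite mulr_natl.
Qed.

Lemma cexp_2ipi : cexp (2%:R * ipi R) = 1.
Proof.
have := two_ipi_divn 1; rewrite !divr1 => ->.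
by rewrite cexp_imaginary cos2pi sin2pi.
Qed.

Lemma prim_root_cexp n : (0 < n)%N ->
  n.-primitive_root (cexp (0 +i* ((pi : R) *+ 2 / n%:R))).
Proof.
move=> n_gt0; set t : R := pi *+ 2 / n%:R.
have t_gt0 : 0 < t by rewrite divr_gt0 ?ltr0n // pmulrn_rgt0 ?pi_gt0.
have tn : t *+ n = pi *+ 2 by rewrite -mulr_natr divfK // pnatr_eq0 -lt0n.
have zk k : cexp (0 +i* t) ^+ k = cos (t *+ k) +i* sin (t *+ k).
  by rewrite -cexpMn complexMn mul0rn cexp_imaginary.
have zn : cexp (0 +i* t) ^+ n = 1 by rewrite zk tn cos2pi sin2pi.
have [m prim_m m_dvd_n] := prim_order_exists n_gt0 zn.
suff -> : n = m by [].
have m_gt0 := prim_order_gt0 prim_m.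
apply/eqP; rewrite eqn_leq (dvdn_leq n_gt0 m_dvd_n) andbT leqNgt.
apply/negP => lt_mn.
have cos_tm : cos (t *+ m) = 1.
  by have := congr1 (@complex.Re R) (prim_expr_order prim_m); rewrite zk.
have : cos (t *+ m) < 1.
  by apply: cos_lt1; rewrite pmulrn_rgt0 // m_gt0 -tn ltr_pMn2l.
by rewrite cos_tm ltxx.
Qed.

End Cexp.

Section FigureEight.
Variable R : realType.

Lemma log'N1 : log' (-1 : R[i]) = - ipi R.
Proof.
rewrite /log' /Arg' /modc /= oppr0 ltxx expr0n /= addr0 sqrrN expr1n sqrtr1.
by rewrite ln1 divr1 acosN1; apply/eqP; rewrite eq_complex /= oppr0 !eqxx.
Qed.

Lemma HE_y1 (u : R[i]) : HE u 1 = 0.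
Proof. by rewrite /HE invr1 mul1r subrr add0r log'N1 addNr mul0r. Qed.

Lemma alexE_root_addV (z : R[i]) : root (alexE R) z -> z + z^-1 = 3%:R.
Proof.
rewrite /root /alexE !hornerE => /eqP root_z.
have z_neq0 : z != 0.
  apply: contra_eq_neq root_z => ->.
  by rewrite expr0n mulr0 oppr0 add0r sub0r oppr_eq0 oner_eq0.
apply: (mulfI z_neq0); rewrite mulrDr mulfV //.
by rewrite -[LHS]addr0 -root_z; ring.
Qed.

Lemma alexE_real (x : R) : (alexE R).[x%:C] = (- x ^+ 2 + 3%:R * x - 1)%:C.
Proof.
rewrite /alexE !hornerE.
by rewrite rmorphB rmorphD rmorphN rmorphXn rmorphM rmorph1 (rmorph_nat _ 3).
Qed.

Lemma alexE_root_pos : exists2 t : R, 0 < t & root (alexE R) t%:C.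
Proof.
set s := Num.sqrt (5 : R).
have s2 : s ^+ 2 = 5 by rewrite sqr_sqrtr.
have s_ge0 : 0 <= s by rewrite sqrtr_ge0.
exists ((3 + s) / 2); first lra.
rewrite /root alexE_real.
have -> : - ((3 + s) / 2) ^+ 2 + 3%:R * ((3 + s) / 2) - 1 = (5 - s ^+ 2) / 4 by field.
by rewrite s2 subrr mul0r.
Qed.

End FigureEight.

Theorem mainTheorem1 (R : realType) :
  (exists (u y : R[i]), y != 0 /\ y + y^-1 = 2%:R * ccosh u - 1 /\
     HE u y = 0 /\ (alexE R).[cexp u] = 0) /\
  (forall a b : nat, (1 < a)%N -> (1 < b)%N -> coprime a b ->
     exists u : R[i], HT a b u = 0 /\ (alexT R a b).[cexp u] = 0).
Proof.
split.
  have [t t_gt0 root_t] := alexE_root_pos R.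
  have e_u : cexp (ln t)%:C = t%:C by rewrite cexp_real lnK.
  exists (ln t)%:C, 1; split; first exact: oner_neq0.
  split; last by split; [exact: HE_y1 | rewrite e_u; exact/eqP].
  by rewrite ccoshE e_u (alexE_root_addV root_t) invr1 -natr1 addrK.
move=> a b a_gt1 b_gt1 co_ab.
have ab_gt0 : (0 < a * b)%N by rewrite muln_gt0 (ltnW a_gt1) (ltnW b_gt1).
set w : R[i] := 0 +i* (pi *+ 2 / (a * b)%:R).
exists (w - 2%:R * ipi R); split.
  have ab_neq0 : (a * b)%:R != 0 :> R[i] by rewrite pnatr_eq0 -lt0n.
  rewrite /HT subrK /w -two_ipi_divn (mulrC (a * b)%:R) divfK //.
  by rewrite subrr expr0n /= oppr0 mul0r.
rewrite cexpD cexpN cexp_2ipi invr1 mulr1.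
apply/eqP; rewrite /alexT.
exact: root_torus_alexander (prim_root_cexp _ ab_gt0).
Qed.
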